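(* Let $M$ be a multiplicity free object of a nonzero finite abelian category $\mathcal C$ over $\mathbb F$, and $\sigma\in\mathrm{JH}(M)$. Then there is an extension path in the radical filtration of length $d^M_{\mathrm{rad}}(\sigma)$ ending with $\sigma$, and an extension path in the socle filtration of length $d_M^{\mathrm{soc}}(\sigma)$ beginning with $\sigma$.
   Context: $\mathcal C$ is an $\mathbb F$-linear abelian category all of whose objects have finite length. Radical filtration: $\mathrm{rad}^0M=M$, $\mathrm{rad}^nM=\mathrm{rad}(\mathrm{rad}^{n-1}M)$; socle filtration: $\mathrm{soc}_{-1}M=0$, $\mathrm{soc}_nM$ = preimage of $\mathrm{soc}(M/\mathrm{soc}_{n-1}M)$. For $M$ multiplicity free and $\sigma\in\mathrm{JH}(M)$, $d^M_{\mathrm{rad}}(\sigma)$ (resp. $d_M^{\mathrm{soc}}(\sigma)$) is the unique $n$ with $\sigma$ a constituent of $\mathrm{rad}^nM/\mathrm{rad}^{n+1}M$ (resp. $\mathrm{soc}_nM/\mathrm{soc}_{n-1}M$). $\sigma$ points to $\sigma'$ if the subquotient of $M$ which is an extension $0\to\sigma'\to X\to\sigma\to0$ is nonsplit; for a filtration $\mathscr F$, $\sigma$ $\mathscr F$-points to $\sigma'$ if moreover the filtration induced by $\mathscr F$ on $X$ has exactly two nonzero graded pieces. An extension path in $\mathscr F$ of length $n$ is a sequence $\sigma_0\to\sigma_1\to\dots\to\sigma_n$ in $\mathrm{JH}(M)$ with each $\sigma_k$ $\mathscr F$-pointing to $\sigma_{k+1}$; it begins with $\sigma_0$ and ends with $\sigma_n$.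 *)

(* An object M of a finite abelian F-linear category is
   modelled as a finite-dimensional module over a finite-dimensional
   F-algebra: the vector space 'rV[F]_n together with the action of finitely
   many generators  act : 'I_k -> 'M[F]_n  (row vectors, acting on the right).
   Sub(quotient)objects of M are submodules (row spaces stable under all
   act i) and their quotients. *)
From mathcomp Require Import all_boot all_order all_algebra.
Set Implicit Arguments.
Unset Strict Implicit.
Unset Printing Implicit Defensive.
Import GRing.Theory.
Local Open Scope ring_scope.

Section Defs.
Variables (F : fieldType) (n k : nat) (act : 'I_k -> 'M[F]_n).

Definition submod (U : 'M[F]_n) : Prop := forall i, (U *m act i <= U)%MS.

Definition simple_sq (x : 'M[F]_n * 'M[F]_n) : Prop :=
  [/\ submod x.1, submod x.2, (x.2 < x.1)%MS &
      forall V : 'M[F]_n, submod V -> (x.2 <= V)%MS -> (V <= x.1)%MS ->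
        (V == x.2)%MS \/ (V == x.1)%MS].

(* isomorphism of the subquotients x.1/x.2 and y.1/y.2 (as modules):
   given by a linear map v |-> v *m f *)
Definition sq_iso (x y : 'M[F]_n * 'M[F]_n) : Prop :=
  exists f : 'M[F]_n,
  [/\ (x.1 *m f <= y.1)%MS, (x.2 *m f <= y.2)%MS,
      forall i, (x.1 *m (act i *m f - f *m act i) <= y.2)%MS,
      (y.1 <= x.1 *m f + y.2)%MS &
      forall v : 'rV[F]_n, (v <= x.1)%MS -> (v *m f <= y.2)%MS -> (v <= x.2)%MS].

Definition comp_series (m : nat) (c : nat -> 'M[F]_n) : Prop :=
  [/\ (c 0%N == (0 : 'M[F]_n))%MS, (c m == 1%:M)%MS &
      forall j, (j < m)%N -> simple_sq (c j.+1, c j)].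

Definition mult_free : Prop :=
  forall m c, comp_series m c ->
  forall i j, (i < m)%N -> (j < m)%N ->
    sq_iso (c i.+1, c i) (c j.+1, c j) -> i = j.

(* R = rad U : intersection (inside U) of the maximal submodules of U *)
Definition is_rad (U R : 'M[F]_n) : Prop :=
  [/\ (R <= U)%MS,
      forall X, simple_sq (U, X) -> (R <= X)%MS &
      forall T : 'M[F]_n, (T <= U)%MS ->
        (forall X, simple_sq (U, X) -> (T <= X)%MS) -> (T <= R)%MS].

(* S / W = soc (M / W) : S is the sum of W and all X with X/W simple *)
Definition is_soc_over (W S : 'M[F]_n) : Prop :=
  [/\ (W <= S)%MS,
      forall X, simple_sq (X, W) -> (X <= S)%MS &
      forall T : 'M[F]_n, (W <= T)%MS ->
        (forall X, simple_sq (X, W) -> (X <= T)%MS) -> (S <= T)%MS].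

Definition radical_filtration (Rad : nat -> 'M[F]_n) : Prop :=
  (Rad 0%N == 1%:M)%MS /\ forall j, is_rad (Rad j) (Rad j.+1).

(* Soc j = soc_j M  (with soc_{-1} M = 0) *)
Definition soc_prev (Soc : nat -> 'M[F]_n) (j : nat) : 'M[F]_n :=
  if j is j'.+1 then Soc j' else (0 : 'M[F]_n).

Definition socle_filtration (Soc : nat -> 'M[F]_n) : Prop :=
  forall j, is_soc_over (soc_prev Soc j) (Soc j).

(* A filtration is described by its graded pieces top j / bot j. *)

Definition constituent (top bot : 'M[F]_n) (sigma : 'M[F]_n * 'M[F]_n) : Prop :=
  exists U W : 'M[F]_n,
    [/\ (bot <= W)%MS, (U <= top)%MS, simple_sq (U, W) & sq_iso (U, W) sigma].

(* the j-th graded piece of the filtration induced on the subquotient U/W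
   is nonzero *)
Definition induced_piece_nz (top bot : nat -> 'M[F]_n) (U W : 'M[F]_n) (j : nat)
  : Prop := ~ ((top j :&: U + W) == (bot j :&: U + W))%MS.

Definition points_to (top bot : nat -> 'M[F]_n) (s s' : 'M[F]_n * 'M[F]_n) : Prop :=
  exists U U' W : 'M[F]_n,
  [/\ simple_sq (U', W) /\ simple_sq (U, U'), sq_iso (U', W) s' /\ sq_iso (U, U') s,
      (* the extension 0 -> U'/W -> U/W -> U/U' -> 0 is nonsplit *)
      ~ (exists V : 'M[F]_n, [/\ submod V, (W <= V)%MS,
             (V :&: U' == W)%MS & (V + U' == U)%MS]) &
      (* the induced filtration on U/W has exactly two nonzero graded pieces *)
      exists i j, [/\ i <> j, induced_piece_nz top bot U W i,
                      induced_piece_nz top bot U W j &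
                      forall l, l <> i -> l <> j -> ~ induced_piece_nz top bot U W l]].

Definition ext_path (top bot : nat -> 'M[F]_n) (len : nat)
  (p : nat -> 'M[F]_n * 'M[F]_n) : Prop :=
  (forall l, (l <= len)%N -> simple_sq (p l)) /\
  (forall l, (l < len)%N -> points_to top bot (p l) (p l.+1)).

End Defs.

(* Both statements follow by induction on the layer.  Let X1/X2 be a simple
   subquotient in layer d+1 of the radical filtration, and put L = rad^d M,
   A = rad L and R = rad A.  Take W maximal among the submodules of L that
   contain X2 + R but not X1.  Then (X1 + W)/W is isomorphic to X1/X2; X1 + W
   contains A, because every submodule of A containing R is an intersection of
   maximal submodules of A; and X1 + W <> L, since otherwise L/W would be simple
   and A <= W.  A simple subquotient U/(X1 + W) with U <= L lies in layer d, its
   extension by (X1 + W)/W is nonsplit by the maximality of W, and the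
   filtration induced on U/W has exactly the two pieces d and d+1.  The socle
   filtration is treated dually, with a minimal submodule U of X1 :&: soc_(d+1)
   containing soc_(d-1) but not contained in X2. *)

From mathcomp Require Import all_boot all_order all_algebra.
From mathcomp Require Import zify.
From Stdlib Require Import Classical.
Set Implicit Arguments.
Unset Strict Implicit.
Unset Printing Implicit Defensive.
Import GRing.Theory.
Local Open Scope ring_scope.

Section Submodules.
Variables (F : fieldType) (n k : nat) (act : 'I_k -> 'M[F]_n).
Local Notation submod := (submod act).
Local Notation simple_sq := (simple_sq act).
Local Notation sq_iso := (sq_iso act).
Implicit Types A B R S T U V W X Y Z : 'M[F]_n.

Lemma submod_cap U V : submod U -> submod V -> submod (U :&: V)%MS.
Proof.
move=> sU sV i; rewrite sub_capmx.
by rewrite (submx_trans (submxMr _ (capmxSl _ _)) (sU i))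
           (submx_trans (submxMr _ (capmxSr _ _)) (sV i)).
Qed.

Lemma submod_adds U V : submod U -> submod V -> submod (U + V)%MS.
Proof.
move=> sU sV i; rewrite addsmxMr addsmx_sub.
by rewrite (submx_trans (sU i) (addsmxSl _ _)) (submx_trans (sV i) (addsmxSr _ _)).
Qed.

Lemma simple_sqP U X :
  simple_sq (U, X) <->
  [/\ submod U, submod X, (X <= U)%MS, ~~ (U <= X)%MS &
      forall V, submod V -> (X <= V)%MS -> (V <= U)%MS ->
        (V <= X)%MS \/ (U <= V)%MS].
Proof.
split=> [[/= sU sX] | [sU sX XU UX minUX]].
  rewrite ltmxE => /andP[XU UX] minUX; split=> // V sV XV VU.
  by case: (minUX V sV XV VU) => /andP[]; [left | right].
split=> //=; first by rewrite ltmxE XU UX.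
move=> V sV XV VU; rewrite /eqmx XV VU /= andbT.
by case: (minUX V sV XV VU) => ->; [left | right].
Qed.

Lemma simple_sq_adds U X V : simple_sq (U, X) -> submod V ->
  (V <= U)%MS -> ~~ (V <= X)%MS -> (U <= V + X)%MS.
Proof.
case/simple_sqP=> _ sX XU _ minUX sV VU VX.
case: (minUX _ (submod_adds sV sX) (addsmxSr _ _)) => //.
  by rewrite addsmx_sub VU XU.
by rewrite addsmx_sub (negbTE VX).
Qed.

Lemma simple_sq_cap U X V : simple_sq (U, X) -> submod V ->
  (X <= V)%MS -> ~~ (U <= V)%MS -> (U :&: V <= X)%MS.
Proof.
case/simple_sqP=> sU _ XU _ minUX sV XV UV.
case: (minUX _ (submod_cap sU sV) _ (capmxSl _ _)) => //.
  by rewrite sub_capmx XU XV.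
by rewrite sub_capmx (negbTE UV) andbF.
Qed.

Lemma is_rad_submod U R : submod U -> is_rad act U R -> submod R.
Proof.
move=> sU [RU RX maxR] i; apply: maxR => [|X UX].
  exact: submx_trans (submxMr _ RU) (sU i).
have /simple_sqP[_ sX _ _ _] := UX.
exact: submx_trans (submxMr _ (RX X UX)) (sX i).
Qed.

(* Minimality of S applied to the vectors of S that act i maps into S. *)
Lemma is_soc_submod W S : submod W -> is_soc_over act W S -> submod S.
Proof.
move=> sW [WS XS minS] i.
suff : (S <= S :&: kermx (act i *m cokermx S))%MS.
  by rewrite sub_capmx sub_kermx mulmxA -submxE => /andP[].
apply: minS => [|X XW]; rewrite sub_capmx sub_kermx mulmxA -submxE.
  by rewrite WS (submx_trans (sW i) WS).
have /simple_sqP[sX _ _ _ _] := XW.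
by rewrite XS // (submx_trans (sX i) (XS X XW)).
Qed.

Lemma ex_maxmx (P : 'M[F]_n -> Prop) V0 : P V0 ->
  exists W, [/\ P W, (V0 <= W)%MS & forall V, P V -> (W <= V)%MS -> (V <= W)%MS].
Proof.
have [m] := ubnP (n - \rank V0); elim: m V0 => // m IH V0 ltm PV0.
have [[V [PV V0V VV0]] | noV] := classic (exists V, [/\ P V, V0 <= V & ~~ (V <= V0)]%MS).
  have ltV0V : (\rank V0 < \rank V)%N by apply: rank_ltmx; rewrite ltmxE V0V.
  have [|W [PW VW maxW]] := IH V _ PV; first by have := rank_leq_col V; lia.
  by exists W; split=> //; apply: submx_trans VW.
exists V0; split=> // V PV V0V; apply: NNPP => /negP VV0.
by apply: noV; exists V.
Qed.

Lemma ex_minmx (P : 'M[F]_n -> Prop) V0 : P V0 ->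
  exists W, [/\ P W, (W <= V0)%MS & forall V, P V -> (V <= W)%MS -> (W <= V)%MS].
Proof.
have [m] := ubnP (\rank V0); elim: m V0 => // m IH V0 ltm PV0.
have [[V [PV VV0 V0V]] | noV] := classic (exists V, [/\ P V, V <= V0 & ~~ (V0 <= V)]%MS).
  have ltVV0 : (\rank V < \rank V0)%N by apply: rank_ltmx; rewrite ltmxE VV0.
  have [|W [PW WV minW]] := IH V _ PV; first by lia.
  by exists W; split=> //; apply: submx_trans VV0.
exists V0; split=> // V PV VV0; apply: NNPP => /negP V0V.
by apply: noV; exists V.
Qed.

Lemma ex_simple_quotient V Z : submod V -> submod Z ->
  (V <= Z)%MS -> ~~ (Z <= V)%MS -> exists2 W, (V <= W)%MS & simple_sq (Z, W).
Proof.
move=> sV sZ VZ ZV.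
have [W [[sW WZ ZW] VW maxW]] :=
  @ex_maxmx (fun W => [/\ submod W, W <= Z & ~~ (Z <= W)]%MS) V (And3 sV VZ ZV).
exists W => //; apply/simple_sqP; split=> // U sU WU UZ.
by have [ZU | ZU] := boolP (Z <= U)%MS; [right | left; apply: maxW].
Qed.

Lemma ex_simple_sub V Z : submod V -> submod Z ->
  (V <= Z)%MS -> ~~ (Z <= V)%MS -> exists2 U, (U <= Z)%MS & simple_sq (U, V).
Proof.
move=> sV sZ VZ ZV.
have [U [[sU VU UV] UZ minU]] :=
  @ex_minmx (fun U => [/\ submod U, V <= U & ~~ (U <= V)]%MS) Z (And3 sZ VZ ZV).
exists U => //; apply/simple_sqP; split=> // W sW VW WU.
by have [WV | WV] := boolP (W <= V)%MS; [left | right; apply: minU].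
Qed.

Lemma sq_iso_id U U' X1 X2 : (U <= X1)%MS -> (U' <= X2)%MS ->
  (X1 <= U + X2)%MS -> (U :&: X2 <= U')%MS -> sq_iso (U, U') (X1, X2).
Proof.
move=> UX1 U'X2 X1U UX2; exists 1%:M; split; rewrite /= ?mulmx1 //.
  by move=> i; rewrite mulmx1 mul1mx subrr mulmx0 sub0mx.
by move=> v vU; rewrite mulmx1 => vX2; rewrite (submx_trans _ UX2) // sub_capmx vU.
Qed.

Lemma sq_iso_refl x : sq_iso x x.
Proof. by case: x => U X; apply: sq_iso_id; rewrite ?addsmxSl ?capmxSr. Qed.

(* The isomorphism is the projection onto X1 along a complement C of X1 :&: W
   in W. *)
Lemma sq_iso_adds X1 X2 W : submod X1 -> submod W ->
  (X2 <= X1)%MS -> (X2 <= W)%MS -> (X1 :&: W <= X2)%MS ->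
  sq_iso (X1 + W, W)%MS (X1, X2).
Proof.
move=> sX1 sW X2X1 X2W X1W; set C := (W :\: X1)%MS.
have CW : (C <= W)%MS by apply: diffmxSl.
have X1C0 : (X1 :&: C)%MS = 0 by rewrite capmxC capmx_diff.
have WX2C : (W <= X2 + C)%MS.
  rewrite -{1}(addsmx_diff_cap_eq W X1) addsmxC addsmxS //.
  by rewrite capmxC.
set f := proj_mx X1 C.
have fX1 m (Z : 'M_(m, n)) : (Z <= X1)%MS -> Z *m f = Z by apply: proj_mx_id.
have fC : C *m f = 0 by apply: proj_mx_0.
have fsub m (Z : 'M_(m, n)) : (Z *m f <= X1)%MS by apply: proj_mx_sub.
have fcompl (v : 'rV_n) : (v <= X1 + C)%MS -> (v - v *m f <= C)%MS.
  exact: proj_mx_compl_sub.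
clearbody f.
have fX2 m (Z : 'M_(m, n)) : (Z <= X2 + C)%MS -> (Z *m f <= X2)%MS.
  move=> ZX2C; apply: submx_trans (submxMr f ZX2C) _.
  by rewrite addsmxMr addsmx_sub (fX1 _ _ X2X1) fC sub0mx andbT.
have X1WC : (X1 + W <= X1 + C)%MS.
  by rewrite addsmx_sub addsmxSl (submx_trans WX2C) ?addsmxS.
exists f; split=> /=.
- exact: fsub.
- exact: fX2.
- move=> i; apply: submx_trans (submxMr _ X1WC) _.
  rewrite addsmxMr addsmx_sub !mulmxBr !mulmxA (fX1 _ _ (sX1 i)) (fX1 _ _ (submx_refl X1)).
  rewrite subrr sub0mx fC mul0mx subr0; apply: fX2.
  exact: submx_trans (submxMr _ CW) (submx_trans (sW i) WX2C).
- apply: submx_trans _ (addsmxSl _ X2).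
  by rewrite -{1}(fX1 _ X1) // submxMr ?addsmxSl.
- move=> v vX1W vfX2; rewrite -(subrK (v *m f) v).
  apply: submx_trans (addmx_sub_adds (fcompl _ (submx_trans vX1W X1WC)) vfX2) _.
  by rewrite addsmx_sub CW X2W.
Qed.

(* A/(Y0 :&: Y1) is the direct sum of the simple modules A/Y0 and A/Y1, and
   Z/(Y0 :&: Y1) is a complement of the summand Y0/(Y0 :&: Y1). *)
Lemma simple_sq_complement A Y0 Y1 Z :
  simple_sq (A, Y0) -> simple_sq (A, Y1) -> submod Z -> (Z <= A)%MS ->
  (Y1 :&: Y0 <= Z)%MS -> (Z :&: Y0 <= Y1)%MS -> ~~ (Z <= Y0)%MS ->
  ~~ (Y0 <= Y1)%MS -> simple_sq (A, Z).
Proof.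
move=> AY0 AY1 sZ ZA Y10Z ZY0Y1 ZY0 Y0Y1.
have /simple_sqP[sA sY0 Y0A _ _] := AY0; have /simple_sqP[_ sY1 Y1A _ minAY1] := AY1.
have AZY0 : (A <= Z + Y0)%MS by apply: simple_sq_adds.
apply/simple_sqP; split=> //.
  apply: contra Y0Y1 => AZ; apply: submx_trans _ ZY0Y1.
  by rewrite sub_capmx (submx_trans Y0A AZ) submx_refl.
move=> V sV ZV VA; have VY0Z : (V :&: Y0 <= Z)%MS -> (V <= Z)%MS.
  move=> VY0Z; have VZY0 : (V <= (Z + Y0) :&: V)%MS.
    by rewrite sub_capmx submx_refl (submx_trans VA).
  by rewrite (submx_trans VZY0) // -(matrix_modl _ ZV) addsmx_sub submx_refl capmxC.
case: (minAY1 (V :&: Y0 + Y1)%MS) => //.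
- by apply: submod_adds => //; apply: submod_cap.
- exact: addsmxSr.
- by rewrite addsmx_sub Y1A (submx_trans (capmxSl _ _)).
- rewrite addsmx_sub => /andP[VY0Y1 _]; left; apply: VY0Z.
  by apply: submx_trans Y10Z; rewrite sub_capmx VY0Y1 capmxSr.
move=> AVY0Y1; right; apply: submx_trans AZY0 _; rewrite addsmx_sub ZV /=.
have Y0VY1 : (Y0 <= (V :&: Y0 + Y1) :&: Y0)%MS.
  by rewrite sub_capmx submx_refl (submx_trans Y0A).
rewrite (submx_trans Y0VY1) // -(matrix_modl _ (capmxSr V Y0)) addsmx_sub capmxSl.
exact: submx_trans Y10Z ZV.
Qed.

Lemma simple_sq_complement_sub W Y0 Y1 Z :
  simple_sq (Y0, W) -> simple_sq (Y1, W) -> submod Z -> (W <= Z)%MS ->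
  (Z <= Y1 + Y0)%MS -> (Y1 <= Z + Y0)%MS -> ~~ (Y0 <= Z)%MS ->
  ~~ (Y1 <= Y0)%MS -> simple_sq (Z, W).
Proof.
move=> Y0W Y1W sZ WZ ZY10 Y1ZY0 Y0Z Y1Y0.
have /simple_sqP[sY0 sW WY0 _ _] := Y0W; have /simple_sqP[sY1 _ WY1 _ minY1W] := Y1W.
have ZY0W : (Z :&: Y0 <= W)%MS by rewrite capmxC; apply: simple_sq_cap.
apply/simple_sqP; split=> //.
  apply: contra Y1Y0 => ZW; apply: submx_trans Y1ZY0 _.
  by rewrite addsmx_sub (submx_trans ZW WY0) submx_refl.
move=> V sV WV VZ; case: (minY1W ((V + Y0) :&: Y1)%MS) => //.
- by apply: submod_cap => //; apply: submod_adds.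
- by rewrite sub_capmx WY1 (submx_trans WV (addsmxSl _ _)).
- exact: capmxSr.
- move=> VY0Y1W; left; apply: submx_trans ZY0W; rewrite sub_capmx VZ /=.
  have VY0Y1 : (V <= (Y0 + Y1) :&: (V + Y0))%MS.
    by rewrite sub_capmx addsmxSl addsmxC (submx_trans VZ).
  rewrite (submx_trans VY0Y1) // -(matrix_modl _ (addsmxSr V Y0)) addsmx_sub submx_refl /=.
  by rewrite capmxC (submx_trans VY0Y1W).
rewrite sub_capmx submx_refl andbT => Y1VY0; right.
have ZVY0 : (Z <= (V + Y0) :&: Z)%MS.
  rewrite sub_capmx submx_refl andbT (submx_trans ZY10) // addsmx_sub Y1VY0 addsmxSr //.
rewrite (submx_trans ZVY0) // -(matrix_modl _ VZ) addsmx_sub submx_refl /=.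
by rewrite capmxC (submx_trans ZY0W).
Qed.

Lemma is_rad_avoid A R T : is_rad act A R -> (T <= A)%MS -> ~~ (T <= R)%MS ->
  exists2 Y, simple_sq (A, Y) & ~~ (T <= Y)%MS.
Proof.
case=> _ _ maxR TA /negP TR; apply: NNPP => noY; apply: TR; apply: maxR => // X AX.
by apply: NNPP => /negP TX; apply: noY; exists X.
Qed.

Lemma is_soc_avoid W S T : is_soc_over act W S -> (W <= T)%MS -> ~~ (S <= T)%MS ->
  exists2 Y, simple_sq (Y, W) & ~~ (Y <= T)%MS.
Proof.
case=> _ _ minS WT /negP ST; apply: NNPP => noY; apply: ST; apply: minS => // X XW.
by apply: NNPP => /negP XT; apply: noY; exists X.
Qed.

(* Over the radical, every submodule B of A is the intersection of the maximal
   submodules of A containing it. *)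
Lemma ex_maximal_avoiding A R B T : is_rad act A R -> submod B ->
  (R <= B)%MS -> (B <= A)%MS -> (T <= A)%MS -> ~~ (T <= B)%MS ->
  exists Y, [/\ simple_sq (A, Y), (B <= Y)%MS & ~~ (T <= Y)%MS].
Proof.
move=> radA; have [m] := ubnP (\rank B); elim: m B T => // m IH B T ltm sB RB BA TA TB.
have [Y0 AY0 TY0] := is_rad_avoid radA TA (contra (fun TR => submx_trans TR RB) TB).
have [BY0 | BY0] := boolP (B <= Y0)%MS; first by exists Y0.
have /simple_sqP[_ sY0 Y0A _ _] := AY0.
set D := (B :&: Y0)%MS; set T' := ((T + B) :&: Y0)%MS.
have T'D : ~~ (T' <= D)%MS.
  apply: contra TB => T'D; apply: submx_trans (addsmxSl T B) _.
  have TBY0 : (T + B <= (B + Y0) :&: (T + B))%MS.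
    rewrite sub_capmx submx_refl andbT (submx_trans _ (simple_sq_adds AY0 sB BA BY0)) //.
    by rewrite addsmx_sub TA.
  rewrite (submx_trans TBY0) // -(matrix_modl _ (addsmxSr T B)) addsmx_sub submx_refl /=.
  by rewrite capmxC (submx_trans T'D) ?capmxSl.
have [||||Y1 [AY1 DY1 T'Y1]] := IH D T' _ (submod_cap sB sY0) _ _ _ T'D.
- suff : (\rank D < \rank B)%N by lia.
  by apply: rank_ltmx; rewrite ltmxE capmxSl sub_capmx submx_refl BY0.
- by rewrite sub_capmx RB; case: radA => _ RX _; apply: RX.
- exact: submx_trans (capmxSl _ _) BA.
- exact: submx_trans (capmxSr _ _) Y0A.
have /simple_sqP[_ sY1 _ _ _] := AY1.
set Y := (Y1 :&: Y0 + B)%MS.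
have BY : (B <= Y)%MS by apply: addsmxSr.
have YY0 : (Y :&: Y0 <= Y1)%MS.
  rewrite -(matrix_modl _ (capmxSr Y1 Y0)) addsmx_sub capmxSl /=.
  by rewrite (submx_trans _ DY1).
exists Y; split=> //.
  apply: (simple_sq_complement AY0 AY1 _ _ (addsmxSl _ _) YY0).
  - by apply: submod_adds => //; apply: submod_cap.
  - by rewrite addsmx_sub BA (submx_trans (capmxSr _ _) Y0A).
  - by apply: contra BY0; apply: submx_trans BY.
  - by apply: contra T'Y1 => Y0Y1; apply: submx_trans (capmxSr _ _) Y0Y1.
apply: contra T'Y1 => TY; apply: submx_trans YY0; apply: capmxS => //.
by rewrite addsmx_sub TY.
Qed.

Lemma ex_simple_avoiding W S B T : is_soc_over act W S -> submod B ->
  (W <= B)%MS -> (B <= S)%MS -> (W <= T)%MS -> ~~ (B <= T)%MS ->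
  exists Y, [/\ simple_sq (Y, W), (Y <= B)%MS & ~~ (Y <= T)%MS].
Proof.
move=> socS; have [m] := ubnP (n - \rank B); elim: m B T => // m IH B T ltm sB WB BS WT BT.
have [Y0 Y0W Y0T] := is_soc_avoid socS WT (contra (submx_trans BS) BT).
have [Y0B | Y0B] := boolP (Y0 <= B)%MS; first by exists Y0.
have /simple_sqP[sY0 _ WY0 _ _] := Y0W.
have Y0BW : (Y0 :&: B <= W)%MS by apply: simple_sq_cap.
set D := (B + Y0)%MS; set T' := (T :&: B + Y0)%MS.
have DT' : ~~ (D <= T')%MS.
  apply: contra BT => DT'; apply: submx_trans (capmxSl T B).
  have BT'B : (B <= T' :&: B)%MS.
    by rewrite sub_capmx submx_refl (submx_trans (addsmxSl _ _) DT').
  rewrite (submx_trans BT'B) // -(matrix_modl _ (capmxSr T B)) addsmx_sub submx_refl /=.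
  by rewrite sub_capmx capmxSr (submx_trans Y0BW WT).
have [||||Y1 [Y1W Y1D Y1T']] := IH D T' _ (submod_adds sB sY0) _ _ _ DT'.
- suff : (\rank B < \rank D)%N by have := rank_leq_col D; lia.
  by apply: rank_ltmx; rewrite ltmxE addsmxSl addsmx_sub submx_refl Y0B.
- exact: submx_trans WB (addsmxSl _ _).
- by rewrite addsmx_sub BS; case: socS => _ XS _; apply: XS.
- exact: submx_trans WY0 (addsmxSr _ _).
have /simple_sqP[sY1 _ WY1 _ _] := Y1W.
set Y := ((Y1 + Y0) :&: B)%MS.
have YB : (Y <= B)%MS by apply: capmxSr.
have Y1YY0 : (Y1 <= Y + Y0)%MS.
  have Y1Y10D : (Y1 <= (Y0 + B) :&: (Y1 + Y0))%MS.
    by rewrite sub_capmx addsmxSl andbT addsmxC.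
  rewrite (submx_trans Y1Y10D) // -(matrix_modl _ (addsmxSr Y1 Y0)) addsmxC.
  by rewrite capmxC.
exists Y; split=> //.
  apply: (simple_sq_complement_sub Y0W Y1W _ _ (capmxSl _ _) Y1YY0).
  - by apply: submod_cap => //; apply: submod_adds.
  - by rewrite sub_capmx WB (submx_trans WY1 (addsmxSl _ _)).
  - by apply: contra Y0B => Y0Y; apply: submx_trans Y0Y YB.
  - by apply: contra Y1T' => Y1Y0; apply: submx_trans Y1Y0 (addsmxSr _ _).
apply: contra Y1T' => YT; apply: submx_trans Y1YY0 _; apply: addsmxS => //.
by rewrite sub_capmx YT.
Qed.

Definition ext_splits U U' W :=
  exists V, [/\ submod V, (W <= V)%MS, (V :&: U' == W)%MS & (V + U' == U)%MS].

Section RadicalStep.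
Variables L A R X1 X2 W : 'M[F]_n.
Hypotheses (sL : submod L) (radL : is_rad act L A) (radA : is_rad act A R).
Hypotheses (X1X2 : simple_sq (X1, X2)) (X1A : (X1 <= A)%MS).
Hypotheses (sW : submod W) (X2W : (X2 <= W)%MS) (RW : (R <= W)%MS).
Hypotheses (WL : (W <= L)%MS) (X1W : ~~ (X1 <= W)%MS).
Hypothesis maxW : forall V, submod V -> (W <= V)%MS -> (V <= L)%MS ->
  ~~ (V <= W)%MS -> (X1 <= V)%MS.

Let sX1 : submod X1. Proof. by case/simple_sqP: X1X2. Qed.
Let sA : submod A. Proof. exact: is_rad_submod radL. Qed.
Let AL : (A <= L)%MS. Proof. by case: radL. Qed.

Lemma rad_step_simple Z : submod Z -> (W <= Z)%MS -> (Z <= L)%MS ->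
  (Z <= X1 + W)%MS -> (X1 <= Z)%MS -> simple_sq (Z, W).
Proof.
move=> sZ WZ ZL ZX1W X1Z; apply/simple_sqP; split=> //.
  exact: contra (submx_trans X1Z) X1W.
move=> V sV WV VZ; have [VW | VW] := boolP (V <= W)%MS; [by left | right].
by rewrite (submx_trans ZX1W) // addsmx_sub WV maxW // (submx_trans VZ).
Qed.

Lemma rad_step_iso : sq_iso (X1 + W, W)%MS (X1, X2).
Proof.
have /simple_sqP[_ _ X2X1 _ _] := X1X2.
by apply: sq_iso_adds => //; apply: simple_sq_cap.
Qed.

Lemma rad_step_rad_sub : (A <= X1 + W)%MS.
Proof.
have [|||||Y [AY AWY X1Y]] := @ex_maximal_avoiding A R (A :&: W)%MS X1 radA.
- exact: submod_cap.
- by case: radA => RA _ _; rewrite sub_capmx RA RW.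
- exact: capmxSl.
- done.
- by apply: contra X1W => X1AW; apply: submx_trans X1AW (capmxSr _ _).
have /simple_sqP[_ sY YA _ _] := AY.
have [YW | YW] := boolP (Y <= W)%MS.
  by rewrite (submx_trans (simple_sq_adds AY sX1 X1A X1Y)) // addsmxS.
have X1YW : (X1 <= Y + W)%MS.
  apply: maxW; first exact: submod_adds.
  - exact: addsmxSr.
  - by rewrite addsmx_sub WL (submx_trans YA AL).
  - by rewrite addsmx_sub submx_refl andbT.
have X1YWA : (X1 <= (Y + W) :&: A)%MS by rewrite sub_capmx X1YW.
move: X1Y; rewrite (submx_trans X1YWA) // -(matrix_modl _ YA) addsmx_sub submx_refl.
by rewrite capmxC.
Qed.

Lemma rad_step_top : ~~ (L <= X1 + W)%MS.
Proof.
apply/negP => LX1W; have LW : simple_sq (L, W).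
  by apply: rad_step_simple => //; apply: submx_trans AL.
by case: radL => _ AX _; move: X1W; rewrite (submx_trans X1A (AX _ LW)).
Qed.

Lemma rad_step_nonsplit U : (U <= L)%MS -> ~~ (U <= X1 + W)%MS ->
  ~ ext_splits U (X1 + W)%MS W.
Proof.
move=> UL UX1W [V [sV WV /andP[VX1WW _] /andP[VX1WU UVX1W]]].
have [VW | VW] := boolP (V <= W)%MS.
  move: UX1W; rewrite (submx_trans UVX1W) // addsmx_sub submx_refl.
  by rewrite (submx_trans VW) ?addsmxSr.
have X1V : (X1 <= V)%MS.
  by apply: maxW => //; apply: submx_trans UL; apply: submx_trans VX1WU; apply: addsmxSl.
by move: X1W; rewrite (submx_trans _ VX1WW) // sub_capmx X1V addsmxSl.
Qed.

Lemma rad_step : exists2 U, simple_sq (U, X1 + W)%MS /\ (U <= L)%MS &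
  [/\ simple_sq (X1 + W, W)%MS, (A <= X1 + W)%MS, ~ ext_splits U (X1 + W)%MS W
     & sq_iso (X1 + W, W)%MS (X1, X2)].
Proof.
have X1WL : (X1 + W <= L)%MS by rewrite addsmx_sub WL (submx_trans X1A AL).
have [U UL UX1W] := ex_simple_sub (submod_adds sX1 sW) sL X1WL rad_step_top.
exists U => //; split; [|exact: rad_step_rad_sub| |exact: rad_step_iso].
  by apply: rad_step_simple; rewrite ?addsmxSl ?addsmxSr //; apply: submod_adds.
by apply: rad_step_nonsplit => //; case/simple_sqP: UX1W.
Qed.

End RadicalStep.

Section SocleStep.
Variables P A R X1 X2 U : 'M[F]_n.
Hypotheses (sP : submod P) (socP : is_soc_over act P A) (socA : is_soc_over act A R).
Hypotheses (X1X2 : simple_sq (X1, X2)) (AX2 : (A <= X2)%MS).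
Hypotheses (sU : submod U) (PU : (P <= U)%MS) (UR : (U <= R)%MS).
Hypotheses (UX1 : (U <= X1)%MS) (UX2 : ~~ (U <= X2)%MS).
Hypothesis minU : forall V, submod V -> (P <= V)%MS -> (V <= U)%MS ->
  ~~ (U <= V)%MS -> (V <= X2)%MS.

Let sX2 : submod X2. Proof. by case/simple_sqP: X1X2. Qed.
Let sA : submod A. Proof. exact: is_soc_submod socP. Qed.
Let PA : (P <= A)%MS. Proof. by case: socP. Qed.

Lemma soc_step_simple Z : submod Z -> (P <= Z)%MS -> (Z <= U)%MS ->
  (U :&: X2 <= Z)%MS -> (Z <= X2)%MS -> simple_sq (U, Z).
Proof.
move=> sZ PZ ZU UX2Z ZX2; apply/simple_sqP; split=> //.
  by apply: contra UX2 => UZ; apply: submx_trans UZ ZX2.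
move=> V sV ZV VU; have [UV | UV] := boolP (U <= V)%MS; [by right | left].
by rewrite (submx_trans _ UX2Z) // sub_capmx VU minU // (submx_trans PZ).
Qed.

Lemma soc_step_iso : sq_iso (U, U :&: X2)%MS (X1, X2).
Proof.
by apply: sq_iso_id; rewrite ?capmxSr ?(simple_sq_adds X1X2).
Qed.

Lemma soc_step_sub_soc : (U :&: X2 <= A)%MS.
Proof.
have [|||||Y [YA YAU YX2]] := @ex_simple_avoiding A R (A + U)%MS X2 socA.
- exact: submod_adds.
- exact: addsmxSl.
- by case: socA => AR _ _; rewrite addsmx_sub AR UR.
- done.
- by apply: contra UX2 => AUX2; apply: submx_trans (addsmxSr A U) AUX2.
have /simple_sqP[sY _ AY _ _] := YA.
have [UY | UY] := boolP (U <= Y)%MS.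
  by rewrite (submx_trans _ (simple_sq_cap YA sX2 AX2 YX2)) ?capmxS.
have UYX2 : (U :&: Y <= X2)%MS.
  apply: minU; first exact: submod_cap.
  - by rewrite sub_capmx PU (submx_trans PA AY).
  - exact: capmxSl.
  - by rewrite sub_capmx submx_refl.
have YAUY : (Y <= (A + U) :&: Y)%MS by rewrite sub_capmx YAU submx_refl.
move: YX2; rewrite (submx_trans YAUY) // -(matrix_modl _ AY) addsmx_sub AX2.
by rewrite UYX2.
Qed.

Lemma soc_step_top : ~~ (U :&: X2 <= P)%MS.
Proof.
apply/negP => UX2P; have UP : simple_sq (U, P).
  by apply: soc_step_simple => //; apply: submx_trans AX2.
by case: socP => _ XA _; move: UX2; rewrite (submx_trans (XA _ UP) AX2).
Qed.

Lemma soc_step_nonsplit W : (P <= W)%MS -> ~~ (U :&: X2 <= W)%MS ->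
  ~ ext_splits U (U :&: X2)%MS W.
Proof.
move=> PW UX2W [V [sV WV /andP[VUX2W _] /andP[VUX2U UVUX2]]].
have [UV | UV] := boolP (U <= V)%MS.
  move: UX2W; rewrite (submx_trans _ VUX2W) // sub_capmx submx_refl.
  by rewrite (submx_trans (capmxSl _ _) UV).
have VX2 : (V <= X2)%MS.
  by apply: minU => //; [apply: submx_trans WV | apply: submx_trans VUX2U; apply: addsmxSl].
by move: UX2; rewrite (submx_trans UVUX2) // addsmx_sub VX2 capmxSr.
Qed.

Lemma soc_step : exists2 W, simple_sq (U :&: X2, W)%MS /\ (P <= W)%MS &
  [/\ simple_sq (U, U :&: X2)%MS, (U :&: X2 <= A)%MS, ~ ext_splits U (U :&: X2)%MS W
     & sq_iso (U, U :&: X2)%MS (X1, X2)].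
Proof.
have PUX2 : (P <= U :&: X2)%MS by rewrite sub_capmx PU (submx_trans PA AX2).
have [W PW UX2W] := ex_simple_quotient sP (submod_cap sU sX2) PUX2 soc_step_top.
exists W => //; split; [|exact: soc_step_sub_soc| |exact: soc_step_iso].
  by apply: soc_step_simple; rewrite ?capmxSl ?capmxSr //; apply: submod_cap.
by apply: soc_step_nonsplit => //; case/simple_sqP: UX2W.
Qed.

End SocleStep.

Section Filtrations.
Variables top bot : nat -> 'M[F]_n.
Implicit Types (x : 'M[F]_n * 'M[F]_n) (p : nat -> 'M[F]_n * 'M[F]_n).

Lemma induced_piece_zero U W l : (bot l <= top l)%MS ->
  (U <= bot l)%MS \/ (top l <= W)%MS -> ~ induced_piece_nz top bot U W l.
Proof.
move=> bt UbtW; apply; apply/andP; split; last by rewrite addsmxS ?capmxS.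
case: UbtW => [Ub | tW].
  by rewrite addsmxS // sub_capmx capmxSr (submx_trans (capmxSr _ _)).
by rewrite addsmx_sub addsmxSr (submx_trans (capmxSl _ _) (submx_trans tW (addsmxSr _ _))).
Qed.

Lemma induced_piece_nz_witness U W l X Y : (X <= top l :&: U)%MS ->
  (bot l :&: U + W <= Y)%MS -> ~~ (X <= Y)%MS -> induced_piece_nz top bot U W l.
Proof.
move=> XtU bUWY XY /andP[tb _]; move: XY.
by rewrite (submx_trans (submx_trans XtU (addsmxSl _ W)) (submx_trans tb bUWY)).
Qed.

Lemma ext_path_rcons d p x : ext_path act top bot d p -> simple_sq x ->
  points_to act top bot (p d) x ->
  ext_path act top bot d.+1 (fun l => if (l <= d)%N then p l else x).
Proof.
move=> [ps pp] sx pdx; split=> [l _ | l]; first by case: ifP => // /ps.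
rewrite ltnS => ld; rewrite ld.
by case: ltngtP ld => [/pp | | ->]; rewrite ?ltnn.
Qed.

Lemma ext_path_cons d p x : ext_path act top bot d p -> simple_sq x ->
  points_to act top bot x (p 0%N) ->
  ext_path act top bot d.+1 (fun l => if l is l'.+1 then p l' else x).
Proof.
move=> [ps pp] sx xp0; split=> [[|l] | [|l]] //=; rewrite ?ltnS; [exact: ps | exact: pp].
Qed.

End Filtrations.

Section RadicalFiltration.
Variable Rad : nat -> 'M[F]_n.
Hypothesis radRad : radical_filtration act Rad.
Local Notation radF := (points_to act Rad (fun j => Rad j.+1)).

Lemma radical_filtration_submod j : submod (Rad j).
Proof.
case: radRad => Rad0 radS; elim: j => [i | j sRj]; last exact: is_rad_submod (radS j).
by case/andP: Rad0 => _; apply: submx_trans; apply: submx1.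
Qed.

Lemma radical_filtration_antimono i j : (i <= j)%N -> (Rad j <= Rad i)%MS.
Proof.
move/subnK <-; elim: (j - i)%N => // m IH.
by apply: submx_trans IH; case: (radRad.2 (m + i)%N).
Qed.

Definition rad_layer d (x : 'M[F]_n * 'M[F]_n) :=
  [/\ simple_sq x, (x.1 <= Rad d)%MS & ~~ (x.1 <= x.2 + Rad d.+1)%MS].

Lemma rad_points_to d U U' W x :
  simple_sq (U, U') -> simple_sq (U', W) -> (U <= Rad d)%MS ->
  (Rad d.+1 <= U')%MS -> ~~ (Rad d.+1 <= W)%MS -> (Rad d.+2 <= W)%MS ->
  ~ ext_splits U U' W -> sq_iso (U', W) x -> radF (U, U') x.
Proof.
move=> UU' U'W URd RU' RW RW' nsplit U'Wx.
have /simple_sqP[_ _ U'U UU'n _] := UU'; have /simple_sqP[_ _ WU' _ _] := U'W.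
exists U, U', W; split=> //; first by split=> //; apply: sq_iso_refl.
exists d, d.+1; split; first exact: n_Sn.
- apply: (@induced_piece_nz_witness _ _ _ _ _ U U') => //.
    by rewrite sub_capmx URd submx_refl.
  by rewrite addsmx_sub WU' (submx_trans (capmxSl _ _)).
- apply: (@induced_piece_nz_witness _ _ _ _ _ (Rad d.+1) W) => //.
    by rewrite sub_capmx submx_refl (submx_trans RU').
  by rewrite addsmx_sub submx_refl (submx_trans (capmxSl _ _)).
move=> l ld lSd; apply: induced_piece_zero; first exact: radical_filtration_antimono.
case: (ltnP l d) => [lt | ge]; [left | right].
  exact: submx_trans URd (radical_filtration_antimono lt).
by apply: submx_trans RW'; apply: radical_filtration_antimono; lia.
Qed.

Lemma rad_layer_step d x : rad_layer d.+1 x ->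
  exists2 y, rad_layer d y & radF y x.
Proof.
case: x => X1 X2 [X1X2 /= X1A X1X2R].
have radL := radRad.2 d; have radA := radRad.2 d.+1.
have sL := radical_filtration_submod d; have sR := radical_filtration_submod d.+2.
have /simple_sqP[sX1 sX2 X2X1 _ _] := X1X2.
have AL : (Rad d.+1 <= Rad d)%MS by case: radL.
have X2RL : (X2 + Rad d.+2 <= Rad d)%MS.
  rewrite addsmx_sub (submx_trans X2X1 (submx_trans X1A AL)).
  by rewrite radical_filtration_antimono // ltnW.
have [W [[sW X2RW WL X1W] _ maxW]] := @ex_maxmx
  (fun W => [/\ submod W, X2 + Rad d.+2 <= W, W <= Rad d & ~~ (X1 <= W)]%MS)
  _ (And4 (submod_adds sX2 sR) (submx_refl _) X2RL X1X2R).
have [X2W RW] : (X2 <= W)%MS /\ (Rad d.+2 <= W)%MS by apply/andP; rewrite -addsmx_sub.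
have maxW' V : submod V -> (W <= V)%MS -> (V <= Rad d)%MS -> ~~ (V <= W)%MS -> (X1 <= V)%MS.
  move=> sV WV VL /negP VW; apply: NNPP => /negP X1V; apply: VW; apply: maxW => //.
  by split=> //; apply: submx_trans WV.
have [U [UU' UL] [U'W AU' nsplit U'Wx]] :=
  rad_step sL radL radA X1X2 X1A sW X2W RW WL X1W maxW'.
have /simple_sqP[_ _ _ UU'n _] := UU'.
exists (U, X1 + W)%MS.
  by split=> //=; apply: contra UU'n => /submx_trans; apply; rewrite addsmx_sub submx_refl.
apply: (@rad_points_to d U (X1 + W)%MS W) => //.
by apply: contra X1W; apply: submx_trans X1A.
Qed.

Lemma rad_layer_path d x : rad_layer d x ->
  exists p, ext_path act Rad (fun j => Rad j.+1) d p /\ p d = x.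
Proof.
elim: d x => [|d IH] x xd; first by exists (fun=> x); split=> //; case: xd.
have [y yd yx] := rad_layer_step xd; have [p [pd pdy]] := IH y yd.
exists (fun l => if (l <= d)%N then p l else x); split; last by rewrite ltnn.
by apply: ext_path_rcons; rewrite ?pdy //; case: xd.
Qed.

Lemma rad_layer_of_constituent d s : constituent act (Rad d) (Rad d.+1) s ->
  exists2 x, rad_layer d x & sq_iso x s.
Proof.
move=> [U [W [RW URd UW Us]]]; exists (U, W) => //; split=> //=.
have /simple_sqP[_ _ _ UWn _] := UW.
by apply: contra UWn => /submx_trans; apply; rewrite addsmx_sub submx_refl.
Qed.

End RadicalFiltration.

Section SocleFiltration.
Variable Soc : nat -> 'M[F]_n.
Hypothesis socSoc : socle_filtration act Soc.
Local Notation socF := (points_to act Soc (soc_prev Soc)).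

Lemma socle_filtration_submod j : submod (Soc j).
Proof.
elim: j => [|j sSj]; last exact: is_soc_submod sSj (socSoc j.+1).
by apply: is_soc_submod (socSoc 0) => i; rewrite mul0mx sub0mx.
Qed.

Lemma soc_prev_submod j : submod (soc_prev Soc j).
Proof.
by case: j => [i | j]; [rewrite mul0mx sub0mx | apply: socle_filtration_submod].
Qed.

Lemma soc_prev_sub j : (soc_prev Soc j <= Soc j)%MS.
Proof. by case: (socSoc j). Qed.

Lemma socle_filtration_mono i j : (i <= j)%N -> (Soc i <= Soc j)%MS.
Proof.
move/subnK <-; elim: (j - i)%N => // m IH.
exact: submx_trans IH (soc_prev_sub (m + i).+1).
Qed.

Lemma socle_filtration_prev i j : (i < j)%N -> (Soc i <= soc_prev Soc j)%MS.
Proof. by case: j => // j; rewrite ltnS => /socle_filtration_mono. Qed.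

Definition soc_layer d (x : 'M[F]_n * 'M[F]_n) :=
  [/\ simple_sq x, (soc_prev Soc d <= x.2)%MS & ~~ (x.1 :&: Soc d <= x.2)%MS].

Lemma soc_points_to d U U' W x :
  simple_sq (U, U') -> simple_sq (U', W) -> (U <= Soc d.+1)%MS ->
  (Soc d :&: U <= U')%MS -> (U' <= Soc d)%MS -> (soc_prev Soc d <= W)%MS ->
  ~ ext_splits U U' W -> sq_iso (U, U') x -> socF x (U', W).
Proof.
move=> UU' U'W USd SdU U'Sd PW nsplit UU'x.
have /simple_sqP[_ _ U'U UU'n _] := UU'; have /simple_sqP[_ _ WU' U'Wn _] := U'W.
exists U, U', W; split=> //; first by split=> //; apply: sq_iso_refl.
exists d, d.+1; split; first exact: n_Sn.
- apply: (@induced_piece_nz_witness _ _ _ _ _ U' W) => //.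
    by rewrite sub_capmx U'Sd.
  by rewrite addsmx_sub submx_refl (submx_trans (capmxSl _ _)).
- apply: (@induced_piece_nz_witness _ _ _ _ _ U U') => //.
    by rewrite sub_capmx USd submx_refl.
  by rewrite addsmx_sub WU' SdU.
move=> l ld lSd; apply: induced_piece_zero; first exact: soc_prev_sub.
case: (ltnP l d) => [lt | ge]; [right | left].
  exact: submx_trans (socle_filtration_prev lt) PW.
by apply: submx_trans USd _; apply: socle_filtration_prev; lia.
Qed.

Lemma soc_layer_step d x : soc_layer d.+1 x ->
  exists2 y, soc_layer d y & socF x y.
Proof.
case: x => X1 X2 [X1X2 /= AX2 X1RX2].
have socP := socSoc d; have socA := socSoc d.+1.
have sP := soc_prev_submod d; have sR := socle_filtration_submod d.+1.
have /simple_sqP[sX1 sX2 X2X1 _ _] := X1X2.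
have PA := soc_prev_sub d; have AR := soc_prev_sub d.+1.
have PX1R : (soc_prev Soc d <= X1 :&: Soc d.+1)%MS.
  by rewrite sub_capmx (submx_trans PA (submx_trans AX2 X2X1)) (submx_trans PA AR).
have [U [[sU PU UX1R UX2] _ minU]] := @ex_minmx
  (fun U => [/\ submod U, soc_prev Soc d <= U, U <= X1 :&: Soc d.+1 & ~~ (U <= X2)]%MS)
  _ (And4 (submod_cap sX1 sR) PX1R (submx_refl _) X1RX2).
have [UX1 UR] : (U <= X1)%MS /\ (U <= Soc d.+1)%MS by apply/andP; rewrite -sub_capmx.
have minU' V : submod V -> (soc_prev Soc d <= V)%MS -> (V <= U)%MS -> ~~ (U <= V)%MS ->
    (V <= X2)%MS.
  move=> sV PV VU /negP UV; apply: NNPP => /negP VX2; apply: UV; apply: minU => //.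
  by split=> //; apply: submx_trans VU UX1R.
have [W [U'W PW] [UU' U'A nsplit UU'x]] :=
  soc_step sP socP socA X1X2 AX2 sU PU UR UX1 UX2 minU'.
have /simple_sqP[_ _ _ U'Wn _] := U'W.
exists (U :&: X2, W)%MS.
  by split=> //=; apply: contra U'Wn => /(submx_trans _); apply; rewrite sub_capmx submx_refl.
apply: (@soc_points_to d U (U :&: X2)%MS W) => //.
by rewrite sub_capmx capmxSr (submx_trans (capmxSl _ _) AX2).
Qed.

Lemma soc_layer_path d x : soc_layer d x ->
  exists p, ext_path act Soc (soc_prev Soc) d p /\ p 0%N = x.
Proof.
elim: d x => [|d IH] x xd; first by exists (fun=> x); split=> //; case: xd.
have [y yd xy] := soc_layer_step xd; have [p [pd p0y]] := IH y yd.
exists (fun l => if l is l'.+1 then p l' else x); split=> //.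
by apply: ext_path_cons; rewrite ?p0y //; case: xd.
Qed.

Lemma soc_layer_of_constituent d s : constituent act (Soc d) (soc_prev Soc d) s ->
  exists2 x, soc_layer d x & sq_iso x s.
Proof.
move=> [U [W [PW USd UW Us]]]; exists (U, W) => //; split=> //=.
have /simple_sqP[_ _ _ UWn _] := UW.
by apply: contra UWn => /(submx_trans _); apply; rewrite sub_capmx submx_refl.
Qed.

End SocleFiltration.

End Submodules.

Theorem corollary4p4 (F : fieldType) (n k : nat) (act : 'I_k -> 'M[F]_n)
  (Rad Soc : nat -> 'M[F]_n) (sigma : 'M[F]_n * 'M[F]_n) :
  mult_free act ->
  radical_filtration act Rad ->
  socle_filtration act Soc ->
  simple_sq act sigma ->
  (forall d : nat, constituent act (Rad d) (Rad d.+1) sigma ->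
     exists p : nat -> 'M[F]_n * 'M[F]_n,
       ext_path act Rad (fun j => Rad j.+1) d p /\ sq_iso act (p d) sigma) /\
  (forall d : nat, constituent act (Soc d) (soc_prev Soc d) sigma ->
     exists p : nat -> 'M[F]_n * 'M[F]_n,
       ext_path act Soc (soc_prev Soc) d p /\ sq_iso act (p 0%N) sigma).
Proof.
move=> _ radRad socSoc _; split=> d.
  case/rad_layer_of_constituent=> x xd xsigma.
  by have [p [pd pdx]] := rad_layer_path radRad xd; exists p; rewrite pdx.
case/soc_layer_of_constituent=> x xd xsigma.
by have [p [pd p0x]] := soc_layer_path socSoc xd; exists p; rewrite p0x.
Qed.
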